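(* Consider the deterministic split-node max-neighbour algorithm described in the context, on a dynamic graph $(G_r)_{r\ge1}$ with node set $V$. For every round $r\ge1$, \[ D_r\ge t_{r-1}/30, \] where $t_r:=\max_{u,v\in V}|w_r(u)-w_r(v)|$.
   Context: Setting: a fixed set $V$ of $n$ nodes, a sequence of connected graphs $G_r=(V,E_r)$ ($r\ge1$), $N_r(v)$ the neighbours of $v$ in $G_r$, non-negative real loads $w_0(v)$, and $w_r(v)$ the load of $v$ at the end of round $r$. Algorithm: each node $v$ is split into two virtual nodes $v_s$ (sender) and $v_a$ (receiver). In round $r$: set $w_r^1(v_s)=w_r^1(v_a)=w_{r-1}(v)/2$. Each $v_s$ sends a proposal to $u_a$ where $u\in N_r(v)$ maximizes $|w_{r-1}(u)-w_{r-1}(v)|$ (ties broken by a fixed deterministic rule). Each $v_a$ that received proposals accepts exactly one, from $u_s$ with $u$ maximizing $|w_{r-1}(u)-w_{r-1}(v)|$ among proposers (deterministic tie-breaking). For each accepted pair $(u_s,v_a)$, set both virtual loads to $(w_r^1(u_s)+w_r^1(v_a))/2$; other virtual nodes keep their value; then $w_r(v)$ is the sum of the two virtual loads of $v$. An ordered pair $(u,v)$ connects at round $r$ if $u_s$'s proposal to $v_a$ was accepted in round $r$; $A_r$ is the set of ordered pairs that connect at round $r$, and $D_r=\frac12\sum_{(u,v)\in A_r}|w_{r-1}(u)-w_{r-1}(v)|$. *)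

From mathcomp Require Import all_boot all_order all_algebra.
Set Implicit Arguments. Unset Strict Implicit. Unset Printing Implicit Defensive.
Import Order.TTheory GRing.Theory Num.Theory.
Local Open Scope ring_scope.

Section SplitNode.
Variables (R : realFieldType) (V : finType).
(* G r is the graph of round r (r >= 1); G 0 is unused. *)
Variable G : nat -> rel V.
(* Deterministic tie-breaking rules, given as choice functions that may depend
   on the round and on the loads at the end of the previous round.
   prop r w v : the receiver u of v_s's proposal in round r (meaningful only
                if v has a neighbour);
   acc r w v  : the proposer accepted by v_a in round r (meaningful only if
                v_a received proposals). *)
Variable prop : nat -> (V -> R) -> V -> V.
Variable acc  : nat -> (V -> R) -> V -> V.

Definition nbrs (r : nat) (v : V) : {set V} := [set u | G r v u].

Definition prop_ok : Prop :=
  forall r (w : V -> R) v, (0 < r)%N -> nbrs r v != set0 ->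
    prop r w v \in nbrs r v /\
    (forall u, u \in nbrs r v -> `|w u - w v| <= `|w (prop r w v) - w v|).

(* set of u such that u_s sent its proposal to v_a in round r *)
Definition proposers (r : nat) (w : V -> R) (v : V) : {set V} :=
  [set u | (nbrs r u != set0) && (prop r w u == v)].

Definition acc_ok : Prop :=
  forall r (w : V -> R) v, (0 < r)%N -> proposers r w v != set0 ->
    acc r w v \in proposers r w v /\
    (forall u, u \in proposers r w v -> `|w u - w v| <= `|w (acc r w v) - w v|).

(* (u, v) connects in round r: u_s's proposal to v_a was accepted *)
Definition connects (r : nat) (w : V -> R) (u v : V) : bool :=
  (u \in proposers r w v) && (acc r w v == u).

(* virtual loads at the end of round r, given w = w_{r-1} *)
Definition vload_s (r : nat) (w : V -> R) (v : V) : R :=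
  if connects r w v (prop r w v)
  then (w v / 2 + w (prop r w v) / 2) / 2 else w v / 2.

Definition vload_a (r : nat) (w : V -> R) (v : V) : R :=
  if proposers r w v != set0
  then (w (acc r w v) / 2 + w v / 2) / 2 else w v / 2.

Definition step (r : nat) (w : V -> R) (v : V) : R :=
  vload_s r w v + vload_a r w v.

Variable w0 : V -> R.

Fixpoint load (r : nat) : V -> R :=
  match r with
  | 0 => w0
  | r'.+1 => step r'.+1 (load r')
  end.

Definition Dr (r : nat) : R :=
  2^-1 * \sum_(p : V * V | connects r (load r.-1) p.1 p.2)
            `|load r.-1 p.1 - load r.-1 p.2|.

Definition tr (r : nat) : R :=
  \big[Num.max/0]_(p : V * V) `|load r p.1 - load r p.2|.

End SplitNode.

(* Order the nodes by breadth-first distance from x and follow parents from y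
   back to x.  The load difference across each step v -> parent is dominated
   by the gap of v's proposal, which in turn is at most the gap accepted by
   the receiver prop v.  The chain nodes have pairwise distinct distances,
   whereas the chain nodes proposing to a common receiver a are neighbours of
   a, at distance d a - 1, d a or d a + 1; so each accepted gap is charged at
   most three times.  Hence t_{r-1} <= 3 * (sum of accepted gaps) <= 6 D_r. *)

From mathcomp Require Import all_boot all_order all_algebra.
From mathcomp Require Import zify lra.
Set Implicit Arguments. Unset Strict Implicit. Unset Printing Implicit Defensive.
Import Order.TTheory GRing.Theory Num.Theory.
Local Open Scope ring_scope.

Section BreadthFirstDistance.
Variables (T : finType) (e : rel T) (x : T).
Hypothesis e_sym : symmetric e.
Hypothesis connect_from_x : forall v, connect e x v.

Fixpoint ball (k : nat) : {set T} :=
  if k is k'.+1 then ball k' :|: [set v | [exists u in ball k', e u v]]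
  else [set x].

Lemma in_ballS k v :
  (v \in ball k.+1) = (v \in ball k) || [exists u in ball k, e u v].
Proof. by rewrite /= !inE. Qed.

Lemma ball_mono : {homo ball : k l / (k <= l)%N >-> k \subset l}.
Proof.
by apply: homo_leq => [A|A B C|k]; [exact: subxx | exact: subset_trans | exact: subsetUl].
Qed.

Lemma path_last_in_ball p : path e x p -> last x p \in ball (size p).
Proof.
elim/last_ind: p => [|p z IHp]; first by rewrite inE.
rewrite rcons_path last_rcons size_rcons => /andP[/IHp p_ball pz].
by rewrite in_ballS; apply/orP; right; apply/existsP; exists (last x p); rewrite p_ball.
Qed.

Lemma in_some_ball v : exists k, v \in ball k.
Proof. by have /connectP[p /path_last_in_ball ? ->] := connect_from_x v; exists (size p). Qed.

Definition bfs_dist (v : T) : nat := ex_minn (in_some_ball v).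

Lemma in_ball_bfs_dist v k : (v \in ball k) = (bfs_dist v <= k)%N.
Proof.
rewrite /bfs_dist; case: ex_minnP => m v_m min_m.
apply/idP/idP => [/min_m // | le_mk].
by have /subsetP := ball_mono le_mk; apply.
Qed.

Lemma bfs_dist_edge u v : e u v -> (bfs_dist v <= (bfs_dist u).+1)%N.
Proof.
move=> uv; rewrite -in_ball_bfs_dist in_ballS; apply/orP; right.
by apply/existsP; exists u; rewrite in_ball_bfs_dist leqnn.
Qed.

Lemma bfs_dist_parent v :
  (0 < bfs_dist v)%N -> exists2 u, e u v & (bfs_dist u).+1 = bfs_dist v.
Proof.
move Dm: (bfs_dist v) => [//|m] _.
have v_out : v \notin ball m by rewrite in_ball_bfs_dist Dm ltnn.
have : v \in ball m.+1 by rewrite in_ball_bfs_dist Dm.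
rewrite in_ballS (negbTE v_out) => /existsP[u /andP[u_in uv]].
exists u => //; move: u_in (bfs_dist_edge uv); rewrite in_ball_bfs_dist Dm.
lia.
Qed.

Lemma bfs_dist_eq0 v : bfs_dist v = 0%N -> v = x.
Proof. by move=> v0; have := leqnn 0; rewrite -{1}v0 -in_ball_bfs_dist inE => /eqP. Qed.

Lemma bfs_dist_gt0_has_nbr u : (0 < bfs_dist u)%N -> exists v, e u v.
Proof. by case/bfs_dist_parent=> v vu _; exists v; rewrite e_sym. Qed.

Lemma size_common_nbrs_uniq_dist (c : seq T) a :
  uniq (map bfs_dist c) -> {in c, forall u, e u a} -> (size c <= 3)%N.
Proof.
move=> uniq_c c_a; rewrite -(size_map bfs_dist).
apply: (@uniq_leq_size _ _ [:: (bfs_dist a).-1; bfs_dist a; (bfs_dist a).+1]) => //.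
move=> _ /mapP[u /c_a ua ->].
have := bfs_dist_edge ua; have := bfs_dist_edge (etrans (e_sym a u) ua).
by rewrite !inE => ? ?; apply/orP; lia.
Qed.

Variable R : realDomainType.

Lemma bfs_chain (w g : T -> R) :
  (forall u v, e u v -> `|w v - w u| <= g u) ->
  forall y, exists c : seq T,
    [/\ uniq (map bfs_dist c), {in c, forall u, 0 < bfs_dist u <= bfs_dist y}%N
      & w x - w y <= \sum_(u <- c) g u].
Proof.
move=> g_max y; move Dn: (bfs_dist y) => n; elim: n y Dn => [|n IHn] y Dn.
  by exists [::]; rewrite big_nil (bfs_dist_eq0 Dn) subrr.
have [u uy Du] : exists2 u, e u y & (bfs_dist u).+1 = bfs_dist y.
  by apply: bfs_dist_parent; rewrite Dn.
have [|c [uniq_c c_dist sum_c]] := IHn u; first by apply/eqP; rewrite -eqSS Du Dn.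
have step : w u - w y <= g y by apply: le_trans (ler_norm _) (g_max _ _ _); rewrite e_sym.
exists (y :: c); split.
- by rewrite /= uniq_c andbT; apply/mapP=> -[z /c_dist z_le Dz]; lia.
- by move=> z; rewrite inE => /predU1P[-> | /c_dist]; lia.
- by rewrite big_cons; lra.
Qed.

Lemma drop_le_3_sum (w g h : T -> R) (p : T -> T) :
  (forall u v, e u v -> `|w v - w u| <= g u) ->
  (forall u v, e u v -> e u (p u) /\ g u <= h (p u)) ->
  (forall a, 0 <= h a) ->
  forall y, w x - w y <= 3 * \sum_a h a.
Proof.
move=> g_max g_le_h h_ge0 y.
have [c [uniq_c c_dist sum_c]] := bfs_chain g_max y.
have c_prop u : u \in c -> e u (p u) /\ g u <= h (p u).
  by move=> /c_dist /andP[/bfs_dist_gt0_has_nbr [v uv] _]; apply: g_le_h uv.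
apply: (le_trans sum_c); rewrite mulr_natl -sumrMnl.
apply: (@le_trans _ _ (\sum_(u <- c) h (p u))).
  by rewrite big_seq_cond [X in _ <= X]big_seq_cond; apply: ler_sum => u /andP[/c_prop[]].
rewrite (partition_big p xpredT) //; apply: ler_sum => a _.
rewrite (eq_bigr (fun=> h a)) => [|u /eqP ->//].
rewrite big_const_seq iter_addr_0; apply: ler_wpMn2l => //.
rewrite -size_filter; apply: (size_common_nbrs_uniq_dist (a := a)).
  exact: subseq_uniq (map_subseq _ (filter_subseq _ _)) uniq_c.
by move=> u; rewrite mem_filter => /andP[/eqP <- /c_prop[]].
Qed.

End BreadthFirstDistance.

Section Round.
Variables (R : realFieldType) (V : finType) (G : nat -> rel V).
Variables (prop acc : nat -> (V -> R) -> V -> V).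
Hypotheses (prop_max : prop_ok G prop) (acc_max : acc_ok G prop acc).
Variables (r : nat) (w : V -> R).
Hypothesis r_gt0 : (0 < r)%N.

Definition proposal_gap (u : V) : R := `|w (prop r w u) - w u|.

Definition accepted_gap (a : V) : R :=
  if proposers G prop r w a != set0 then `|w (acc r w a) - w a| else 0.

Lemma accepted_gap_ge0 a : 0 <= accepted_gap a.
Proof. by rewrite /accepted_gap; case: ifP. Qed.

Lemma nbr_gap_le_proposal_gap u v : G r u v -> `|w v - w u| <= proposal_gap u.
Proof.
move=> uv; have u_nbrs : nbrs G r u != set0 by apply/set0Pn; exists v; rewrite inE.
by have [_ ->] // := prop_max w r_gt0 u_nbrs; rewrite inE.
Qed.

Lemma proposal_gap_le_accepted_gap u v :
  G r u v -> G r u (prop r w u) /\ proposal_gap u <= accepted_gap (prop r w u).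
Proof.
move=> uv; have u_nbrs : nbrs G r u != set0 by apply/set0Pn; exists v; rewrite inE.
have [pu_nbr _] := prop_max w r_gt0 u_nbrs.
have u_prop : u \in proposers G prop r w (prop r w u) by rewrite inE u_nbrs eqxx.
have ne_prop : proposers G prop r w (prop r w u) != set0 by apply/set0Pn; exists u.
split; first by rewrite inE in pu_nbr.
rewrite /accepted_gap ne_prop /proposal_gap distrC.
by have [_ ->] := acc_max r_gt0 ne_prop.
Qed.

Lemma sum_accepted_gap_le :
  \sum_a accepted_gap a
    <= \sum_(p : V * V | connects G prop acc r w p.1 p.2) `|w p.1 - w p.2|.
Proof.
rewrite [X in _ <= X]big_mkcond /= -(pair_bigA _ (fun u v =>
  if connects G prop acc r w u v then `|w u - w v| else 0)) exchange_big /=.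
apply: ler_sum => a _; rewrite /accepted_gap.
have term_ge0 u : 0 <= if connects G prop acc r w u a then `|w u - w a| else 0.
  by case: ifP.
case: ifP => [ne_prop | _]; last by apply: sumr_ge0 => u _.
have [acc_in _] := acc_max r_gt0 ne_prop.
have acc_connects : connects G prop acc r w (acc r w a) a.
  by rewrite /connects acc_in eqxx.
rewrite (bigD1 (acc r w a)) //= acc_connects lerDl.
by apply: sumr_ge0 => u _.
Qed.

End Round.

Theorem lemma3 (R : realFieldType) (V : finType) (G : nat -> rel V)
    (prop acc : nat -> (V -> R) -> V -> V) (w0 : V -> R) :
  (forall r, (0 < r)%N ->
     [/\ symmetric (G r), irreflexive (G r) & forall x y, connect (G r) x y]) ->
  (forall v, 0 <= w0 v) ->
  prop_ok G prop -> acc_ok G prop acc ->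
  forall r, (0 < r)%N ->
    tr G prop acc w0 r.-1 / 30 <= Dr G prop acc w0 r.
Proof.
move=> G_ok _ prop_max acc_max r r_gt0.
have [G_sym _ G_conn] := G_ok r r_gt0.
rewrite /tr /Dr; set w := load G prop acc w0 r.-1.
set S := \sum_(p | _) _.
have S_ge0 : 0 <= S by apply: sumr_ge0.
have drop_le x y : w x - w y <= 3 * S.
  have := sum_accepted_gap_le acc_max w r_gt0; rewrite -/S.
  have := drop_le_3_sum G_sym (G_conn x)
    (nbr_gap_le_proposal_gap prop_max w r_gt0)
    (proposal_gap_le_accepted_gap prop_max acc_max w r_gt0)
    (accepted_gap_ge0 G prop acc r w) y.
  lra.
have t_le : \big[Num.max/0]_(p : V * V) `|w p.1 - w p.2| <= 3 * S.
  apply: bigmax_le => [|p _]; first lra.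
  by rewrite ler_norml drop_le andbT; have := drop_le p.2 p.1; lra.
lra.
Qed.
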